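(* Let $n\ge 3$ and let $\mu$ be a symmetric measure on $L_n$. If $C^0_\mu<3$, then $$C_\mu=\max\{M_1(\mu),M_2(\mu),C^0_\mu\}.$$
   Context: $L_n$ is the path graph with vertices $\{1,\dots,n\}$ and edges $\{j,j+1\}$, with graph distance $d(i,j)=|i-j|$. A measure $\mu$ on $L_n$ is a weight function $\mu:\{1,\dots,n\}\to(0,\infty)$, $\mu(A)=\sum_{v\in A}\mu(v)$; it is symmetric if $\mu(j)=\mu(n+1-j)$ for all $j$. Closed balls: $B(x,r)=\{y:|x-y|\le r\}$. $C_\mu=\sup\{\mu(B(x,2k+1))/\mu(B(x,k)):1\le x\le n,\ k\in\{0,1,2,\dots\}\}$, $C^0_\mu=\max_x\mu(B(x,1))/\mu(x)$. Define $$M_1(\mu)=\sup\Big\{\frac{\mu(B(1,2k+1))}{\mu(B(1,k))}: k\in\mathbb Z,\ 0\le k<\Big\lceil\frac{n-2}{3}\Big\rceil\Big\},$$ $$M_2(\mu)=\sup\Big\{\frac{\mu(B(j,2k+1))}{\mu(B(j,k))}: j,k\in\mathbb Z,\ 1<j<\Big\lceil\frac n2\Big\rceil,\ \frac{\lceil n/2\rceil-j-1}{2}<k<\min\Big\{\frac{j-2}{2},\Big\lceil\frac{n-2j}{3}\Big\rceil,\Big\lceil\frac n2\Big\rceil-j\Big\}\Big\},$$ with the convention that the supremum of an empty set is $0$. *)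

From HB Require Import structures.
From mathcomp Require Import all_boot all_order all_algebra.
From mathcomp Require Import boolp classical_sets reals.
Set Implicit Arguments. Unset Strict Implicit. Unset Printing Implicit Defensive.
Import Order.TTheory GRing.Theory Num.Theory.
Local Open Scope ring_scope.
Local Open Scope classical_set_scope.

(* Vertices of L_n are the naturals 1..n; a measure is mu : nat -> R,
   only its values on 1..n matter. Distance d(x,y) = |x - y| (in int). *)

Definition muB {R : realType} (n : nat) (mu : nat -> R) (x r : int) : R :=
  \sum_(1 <= y < n.+1 | `|x - (y%:Z)| <= r) mu y.

Definition is_measure {R : realType} (n : nat) (mu : nat -> R) : Prop :=
  forall j : nat, (1 <= j <= n)%N -> 0 < mu j.

Definition is_symmetric {R : realType} (n : nat) (mu : nat -> R) : Prop :=
  forall j : nat, (1 <= j <= n)%N -> mu j = mu (n.+1 - j)%N.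

Definition Cmu {R : realType} (n : nat) (mu : nat -> R) : R :=
  sup [set t | exists (x k : nat), (1 <= x <= n)%N /\
        t = muB n mu x (2 * k + 1)%N%:Z / muB n mu x k%:Z].

Definition C0mu {R : realType} (n : nat) (mu : nat -> R) : R :=
  sup [set t | exists x : nat, (1 <= x <= n)%N /\ t = muB n mu x 1 / mu x].

Definition iceil {R : realType} (q : R) : int := Num.ceil q.

(* M_1(mu); sup of the empty set is 0 (sup0). *)
Definition M1 {R : realType} (n : nat) (mu : nat -> R) : R :=
  sup [set t | exists k : int,
        0 <= k /\ k < iceil ((n%:R - 2) / 3 : R) /\
        t = muB n mu 1 (2 * k + 1) / muB n mu 1 k].

(* M_2(mu); sup of the empty set is 0 (sup0). *)
Definition M2 {R : realType} (n : nat) (mu : nat -> R) : R :=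
  let hn := iceil (n%:R / 2 : R) in
  sup [set t | exists j k : int,
        1 < j /\ j < hn /\
        ((hn - j - 1)%:~R / 2 : R) < k%:~R /\
        (k%:~R : R) < (j - 2)%:~R / 2 /\
        k < iceil (((n%:Z - 2 * j)%:~R) / 3 : R) /\
        k < hn - j /\
        t = muB n mu j (2 * k + 1) / muB n mu j k].

(* Extend mu by zero to the integers.  The bound mu(B(i,1)) <= C^0 mu(i) with C^0 < 3 makes
   this extension concave on [0, n+1], so by symmetry it increases up to the midpoint.
   Reflecting, let the centre x lie in the left half.  If B(x,k), k >= 1, stays away from
   vertex 1, summing the three-point bound over B(x,k) gives
   mu(B(x,2k+1)) <= C^0 mu(B(x,k)): by concavity each shell of B(x,2k+1) outside B(x,k)
   exceeds the boundary shell of B(x,k) by at most a multiple of the outer slope, which the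
   inner shells and the centre pay for.  If B(x,k) reaches vertex 1, it equals some B(1,m)
   while B(x,2k+1) lies inside B(1,2m+1), and the ratios mu(B(1,2m+1))/mu(B(1,m)) decrease
   once 3m+2 >= n, so all of them are at most M_1. *)

From HB Require Import structures.
From mathcomp Require Import all_boot all_order all_algebra.
From mathcomp Require Import boolp classical_sets reals.
From mathcomp Require Import zify lra.
Import Order.TTheory GRing.Theory Num.Theory.
Local Open Scope ring_scope.

(* Also covers the empty set, whose [sup] is 0. *)
Lemma sup_le_nneg (R : realType) (S : set R) (b : R) : 0 <= b -> ubound S b -> sup S <= b.
Proof.
move=> b_ge0 Sb; case: (pselect (S !=set0)%classic) => [S0|S0]; first exact: ge_sup.
by rewrite sup_out // => -[/S0].
Qed.

Section PathMeasure.
Variables (R : realType) (n : nat) (mu : nat -> R).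
Hypothesis mu_gt0 : is_measure n mu.
Hypothesis mu_sym : is_symmetric n mu.

(* Extending by zero outside [1, n] spares case analysis for balls near the ends. *)
Definition muz (i : int) : R := if (0 < i) && (i <= n%:Z) then mu (absz i) else 0.

Lemma muz_out i : ~~ ((0 < i) && (i <= n%:Z)) -> muz i = 0.
Proof. by rewrite /muz => /negbTE ->. Qed.

Lemma muz_nat (j : nat) : (1 <= j <= n)%N -> muz j%:Z = mu j.
Proof. by move=> hj; rewrite /muz ifT //; lia. Qed.

Lemma muz_gt0 i : 0 < i -> i <= n%:Z -> 0 < muz i.
Proof. by move=> h1 h2; rewrite /muz h1 h2; apply/mu_gt0; lia. Qed.

Lemma muz_ge0 i : 0 <= muz i.
Proof.
rewrite /muz; case: ifP => // /andP[h1 h2]; apply/ltW/mu_gt0; lia.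
Qed.

Lemma muz_sym i : muz (n%:Z + 1 - i) = muz i.
Proof.
rewrite /muz; case: (boolP ((0 < i) && (i <= n%:Z))) => hi.
  rewrite ifT; last lia.
  have -> : absz ((n%:Z + 1 - i)%R : int) = (n.+1 - absz i)%N by lia.
  by rewrite -mu_sym //; lia.
by rewrite ifF //; apply/negbTE; lia.
Qed.

Lemma muz_as_sum z : \sum_(1 <= y < n.+1) (if y%:Z == z then mu y else 0) = muz z.
Proof.
case: (boolP ((0 < z) && (z <= n%:Z))) => hz.
  have [m em] : exists m : nat, z = m%:Z by exists (absz z); lia.
  subst z.
  rewrite (eq_bigr (fun y => if y == m then mu y else 0)); last first.
    by move=> y _; rewrite eqz_nat.
  by rewrite -big_mkcond big_nat1_eq ifT ?muz_nat //; lia.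
rewrite muz_out // big1_seq // => y; rewrite mem_index_iota => hy.
by rewrite ifF //; apply/negbTE; lia.
Qed.

Lemma muB0 x : muB n mu x 0 = muz x.
Proof.
rewrite /muB -muz_as_sum big_mkcond; apply: eq_bigr => y _.
by rewrite normr_le0 subr_eq0 eq_sym.
Qed.

Definition shell (x t : int) : R := muz (x - t) + muz (x + t).

Lemma shell_ge0 x t : 0 <= shell x t.
Proof. by rewrite addr_ge0 ?muz_ge0. Qed.

Lemma muBS x (r : nat) : muB n mu x r.+1%:Z = muB n mu x r%:Z + shell x r.+1%:Z.
Proof.
rewrite /muB /shell big_mkcond [in RHS]big_mkcond -!muz_as_sum -!big_split /=.
apply: eq_bigr => y _.
case: (boolP (`|x - y%:Z| <= r%:Z)) => h1.
  rewrite ifT; last lia.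
  by rewrite !ifF ?addr0 //; apply/negbTE; lia.
case: (boolP (`|x - y%:Z| <= r.+1%:Z)) => h2.
  case: (boolP (y%:Z == x - r.+1%:Z)) => h3.
    by rewrite ifF ?add0r ?addr0 //; apply/negbTE; lia.
  by rewrite ifT ?add0r //; lia.
by rewrite !ifF ?addr0 //; apply/negbTE; lia.
Qed.

Lemma muB1 x : muB n mu x 1 = muz (x - 1) + muz x + muz (x + 1).
Proof. have := muBS x 0; rewrite muB0 /shell /= => ->; lra. Qed.

Lemma muB_shells x (r : nat) :
  muB n mu x r%:Z = muz x + \sum_(1 <= t < r.+1) shell x t%:Z.
Proof.
elim: r => [|r IH]; first by rewrite muB0 big_geq // addr0.
by rewrite muBS IH [in RHS]big_nat_recr //= [RHS]addrA.
Qed.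

Lemma muB_split x (k m : nat) : muB n mu x (k + m)%N%:Z =
  muB n mu x k%:Z + \sum_(k.+1 <= t < (k + m).+1) shell x t%:Z.
Proof.
elim: m => [|m IH]; first by rewrite addn0 big_geq // addr0.
rewrite addnS muBS IH [in RHS]big_nat_recr; first by rewrite [RHS]addrA.
lia.
Qed.

Lemma muB_ge_center x (r : nat) : muz x <= muB n mu x r%:Z.
Proof. by rewrite muB_shells lerDl sumr_ge0 // => t _; apply: shell_ge0. Qed.

Lemma muB_gt0 x (r : nat) : 0 < x -> x <= n%:Z -> 0 < muB n mu x r%:Z.
Proof. by move=> h1 h2; apply: lt_le_trans (muz_gt0 x h1 h2) (muB_ge_center x r). Qed.

Lemma muB_reflect x (r : nat) : muB n mu (n%:Z + 1 - x) r%:Z = muB n mu x r%:Z.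
Proof.
elim: r => [|r IH]; first by rewrite !muB0 muz_sym.
rewrite !muBS IH /shell -(muz_sym (x + r.+1%:Z)) -(muz_sym (x - r.+1%:Z)).
by rewrite [muz _ + muz _]addrC; congr (_ + (muz _ + muz _)); lia.
Qed.

Lemma muB_subset x r y s :
  (forall z : nat, (1 <= z <= n)%N -> `|x - z%:Z| <= r -> `|y - z%:Z| <= s) ->
  muB n mu x r <= muB n mu y s.
Proof.
move=> sub; rewrite /muB big_mkcond [X in _ <= X]big_mkcond.
apply: ler_sum_nat => z hz; have hmu : 0 <= mu z by apply/ltW/mu_gt0; lia.
by case: ifP => h; [rewrite sub //; lia | case: ifP].
Qed.

Definition ball_ratio (x : int) (k : nat) : R :=
  muB n mu x (2 * k + 1)%N%:Z / muB n mu x k%:Z.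

Lemma ball_ratio_reflect x k : ball_ratio (n%:Z + 1 - x) k = ball_ratio x k.
Proof. by rewrite /ball_ratio !muB_reflect. Qed.

Lemma ball_ratio_left (x k : nat) : (1 <= x <= k.+1)%N -> (x <= n)%N ->
  ball_ratio x%:Z k <= ball_ratio 1 (x + k - 1).
Proof.
move=> hx hxn; rewrite /ball_ratio.
have -> : muB n mu x%:Z k%:Z = muB n mu 1 (x + k - 1)%N%:Z.
  by apply/le_anti/andP; split; apply: muB_subset => z hz; lia.
apply: ler_wpM2r; first by rewrite invr_ge0 ltW // muB_gt0 //; lia.
by apply: muB_subset => z _; lia.
Qed.

Lemma muB_ratio_bounded : exists B : R, forall x r r' : int,
  0 < x -> x <= n%:Z -> 0 <= r -> muB n mu x r' / muB n mu x r <= B.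
Proof.
exists ((\sum_(1 <= y < n.+1) mu y) * \sum_(1 <= y < n.+1) (mu y)^-1) => x r r' h1 h2 h3.
have [xn ex] : exists xn : nat, x = xn%:Z by exists (absz x); lia.
have [rn ->] : exists rn : nat, r = rn%:Z by exists (absz r); lia.
have hx : (1 <= xn <= n)%N by lia.
have hmu : 0 < mu xn := mu_gt0 xn hx.
have center : mu xn <= muB n mu x rn%:Z by rewrite -(muz_nat xn hx) ex muB_ge_center.
have hB : 0 < muB n mu x rn%:Z := lt_le_trans hmu center.
apply: ler_pM.
- rewrite /muB big_mkcond big_nat_cond sumr_ge0 // => y /andP[hy _].
  by case: ifP => // _; apply/ltW/mu_gt0; lia.
- by rewrite invr_ge0 ltW.
- rewrite /muB big_mkcond; apply: ler_sum_nat => y hy.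
  by case: ifP => // _; apply/ltW/mu_gt0; lia.
apply: (@le_trans _ _ (mu xn)^-1); first by rewrite lef_pV2 ?posrE.
have xn_in : xn \in index_iota 1 n.+1 by rewrite mem_index_iota; lia.
rewrite (bigD1_seq xn xn_in (iota_uniq _ _)) /= lerDl big_seq_cond sumr_ge0 // => y.
by rewrite mem_index_iota => /andP[hy _]; rewrite invr_ge0 ltW // mu_gt0.
Qed.

Lemma ball_ratio_le_Cmu (x k : nat) : (1 <= x <= n)%N -> ball_ratio x%:Z k <= Cmu n mu.
Proof.
move=> hx; apply: ub_le_sup; last by exists x, k.
have [B hB] := muB_ratio_bounded; exists B => t [y [m [hy ->]]]; apply: hB; lia.
Qed.

Lemma Cmu_ge0 : (0 < n)%N -> 0 <= Cmu n mu.
Proof.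
move=> n_gt0; apply: le_trans (ball_ratio_le_Cmu 1 0 _); last lia.
by rewrite divr_ge0 // ltW // muB_gt0 //; lia.
Qed.

Lemma C0mu_le_Cmu : (0 < n)%N -> C0mu n mu <= Cmu n mu.
Proof.
move=> n_gt0; apply: sup_le_nneg (Cmu_ge0 n_gt0) _ => t [x [hx ->]].
by rewrite -(muz_nat x hx) -muB0; apply: (ball_ratio_le_Cmu x 0).
Qed.

Lemma M1_le_Cmu : (0 < n)%N -> M1 n mu <= Cmu n mu.
Proof.
move=> n_gt0; apply: sup_le_nneg (Cmu_ge0 n_gt0) _ => t [k [k_ge0 [_ ->]]].
have := ball_ratio_le_Cmu 1 (absz k) ltac:(lia).
by rewrite /ball_ratio; congr (muB _ _ _ _ / muB _ _ _ _ <= _); lia.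
Qed.

Lemma M2_le_Cmu : (0 < n)%N -> M2 n mu <= Cmu n mu.
Proof.
move=> n_gt0; apply: sup_le_nneg (Cmu_ge0 n_gt0) _ => /=.
move=> t [j [k [j_gt1 [j_lt [k_gt [_ [_ [_ ->]]]]]]]].
set hn := iceil (n%:R / 2 : R) in j_lt k_gt.
have hn_le : hn <= n%:Z.
  rewrite /hn /iceil ceil_le_int (_ : (n%:Z)%:~R = n%:R :> R) //.
  by have : 0 <= n%:R :> R by []; lra.
have k_gt0 : 0 < k.
  rewrite -(ltr0z R); apply: le_lt_trans k_gt.
  by rewrite divr_ge0 // ler0z; lia.
have := ball_ratio_le_Cmu (absz j) (absz k) ltac:(lia).
by rewrite /ball_ratio; congr (muB _ _ _ _ / muB _ _ _ _ <= _); lia.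
Qed.

Lemma C0mu_three_point i : 0 < i -> i <= n%:Z ->
  muz (i - 1) + muz i + muz (i + 1) <= C0mu n mu * muz i.
Proof.
move=> h1 h2; have [m em] : exists m : nat, i = m%:Z by exists (absz i); lia.
subst i; have hm : (1 <= m <= n)%N by lia.
rewrite -muB1 muz_nat // -ler_pdivrMr ?mu_gt0 //.
apply: ub_le_sup; last by exists m.
have [B hB] := muB_ratio_bounded; exists B => t [y [hy ->]].
by rewrite -(muz_nat y hy) -muB0; apply: hB; lia.
Qed.

Lemma ball_ratio_le_M1 (m : nat) : (3 * m + 2 < n)%N -> ball_ratio 1 m <= M1 n mu.
Proof.
move=> hm; apply: ub_le_sup.
  have [B hB] := muB_ratio_bounded; exists B => t [k [k_ge0 [_ ->]]]; apply: hB; lia.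
exists m%:Z; split=> //; split; last first.
  by rewrite /ball_ratio; congr (muB _ _ _ _ / muB _ _ _ _); lia.
rewrite /iceil ltNge ceil_le_int -ltNge ltr_pdivlMr //.
have : (m * 3 + 2)%:R < n%:R :> R by rewrite ltr_nat; lia.
by rewrite natrD natrM (_ : (m%:Z)%:~R = m%:R :> R) //; lra.
Qed.

Variable c : R.
Hypothesis three_point : forall i : int, 0 < i -> i <= n%:Z ->
  muz (i - 1) + muz i + muz (i + 1) <= c * muz i.
Hypothesis c_lt3 : c < 3.

Lemma muz_concave i : 0 < i -> i <= n%:Z -> muz (i - 1) + muz (i + 1) <= 2 * muz i.
Proof.
move=> h1 h2; have := three_point i h1 h2; have hp := muz_gt0 i h1 h2.
have : c * muz i <= 3 * muz i by rewrite ler_pM2r // ltW.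
lra.
Qed.

Definition dmuz (j : int) : R := muz (j + 1) - muz j.

Lemma dmuz_antitone i j : 0 <= i -> i <= j -> j <= n%:Z -> dmuz j <= dmuz i.
Proof.
move=> h0 hij; have [m ->] : exists m : nat, j = i + m%:Z by exists (absz (j - i)); lia.
elim: m {hij} => [|m IH] hm; first by rewrite addr0.
apply: le_trans (IH _); last lia.
have := muz_concave (i + m.+1%:Z) ltac:(lia) hm.
rewrite /dmuz (_ : i + m.+1%:Z - 1 = i + m%:Z); last lia.
rewrite (_ : i + m%:Z + 1 = i + m.+1%:Z); last lia.
lra.
Qed.

Lemma muz_telescope p (m : nat) :
  muz (p + m%:Z) - muz p = \sum_(0 <= t < m) dmuz (p + t%:Z).
Proof.
elim: m => [|m IH]; first by rewrite addr0 subrr big_geq.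
rewrite big_nat_recr //= -IH /dmuz (_ : p + m%:Z + 1 = p + m.+1%:Z); last lia.
lra.
Qed.

Lemma muz_diff_le p (m : nat) j : 0 <= j -> j <= p -> p + m%:Z <= n%:Z + 1 ->
  muz (p + m%:Z) - muz p <= m%:R * dmuz j.
Proof.
move=> h0 hjp hm; rewrite muz_telescope.
have -> : m%:R * dmuz j = \sum_(0 <= t < m) dmuz j by rewrite sumr_const_nat subn0 mulr_natl.
by apply: ler_sum_nat => t /andP[_ ht]; apply: dmuz_antitone; lia.
Qed.

Lemma muz_diff_ge p (m : nat) j : 0 <= p -> p + m%:Z - 1 <= j -> j <= n%:Z ->
  m%:R * dmuz j <= muz (p + m%:Z) - muz p.
Proof.
move=> h0 hjp hj; rewrite muz_telescope.
have -> : m%:R * dmuz j = \sum_(0 <= t < m) dmuz j by rewrite sumr_const_nat subn0 mulr_natl.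
by apply: ler_sum_nat => t /andP[_ ht]; apply: dmuz_antitone; lia.
Qed.

Lemma dmuz_ge0 m : 0 <= m -> 2 * m <= n%:Z -> 0 <= dmuz m.
Proof.
move=> h0 hm.
have : dmuz (n%:Z - m) <= dmuz m by apply: dmuz_antitone; lia.
(* and dmuz (n - m) = - dmuz m by symmetry *)
rewrite /dmuz -(muz_sym (n%:Z - m + 1)) -(muz_sym (n%:Z - m)).
rewrite (_ : n%:Z + 1 - (n%:Z - m + 1) = m); last lia.
rewrite (_ : n%:Z + 1 - (n%:Z - m) = m + 1); last lia.
lra.
Qed.

Lemma muz_le i j : 0 <= i -> i <= j -> i + j <= n%:Z + 1 -> muz i <= muz j.
Proof.
suff left_half k l : 0 <= k -> k <= l -> 2 * (l - 1) <= n%:Z -> muz k <= muz l.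
  move=> h0 hij hj; case: (boolP (2 * (j - 1) <= n%:Z)) => hj'; first exact: left_half.
  by rewrite -(muz_sym j); apply: left_half; lia.
move=> h0 hkl hl; have [m el] : exists m : nat, l = k + m%:Z by exists (absz (l - k)); lia.
case: m el => [|m] el; first by rewrite el addr0.
have := muz_diff_ge k m.+1 (l - 1) h0 ltac:(lia) ltac:(lia).
have := dmuz_ge0 (l - 1) ltac:(lia) hl.
rewrite -el => hd hdiff; have : 0 <= m.+1%:R * dmuz (l - 1) by rewrite mulr_ge0.
lra.
Qed.

Lemma muz_ge_slope (m : nat) j : m%:Z - 1 <= j -> j <= n%:Z ->
  m%:R * Num.max (dmuz j) 0 <= muz m%:Z.
Proof.
move=> h1 h2; case: (lerP 0 (dmuz j)) => hd.
  have := muz_diff_ge 0 m j (lexx _) ltac:(lia) h2.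
  by rewrite add0r (muz_out 0) ?subr0 //; lia.
by rewrite mulr0 muz_ge0.
Qed.

Section InteriorBall.
Variable x : int.

(* The left side is the sum of muz (i - 1) + muz i + muz (i + 1) over i in B(x,k). *)
Lemma muB_three_point (k : nat) : 0 < x - k%:Z -> x + k%:Z <= n%:Z ->
  3 * muB n mu x k%:Z - shell x k%:Z + shell x k.+1%:Z <= c * muB n mu x k%:Z.
Proof.
elim: k => [|k IH] h1 h2.
  have := three_point x ltac:(lia) ltac:(lia).
  rewrite muB0 /shell.
  have -> : x - 0%:Z = x by lia.
  lra.
have {}IH := IH ltac:(lia) ltac:(lia).
have HL := three_point (x - k.+1%:Z) ltac:(lia) ltac:(lia).
have HR := three_point (x + k.+1%:Z) ltac:(lia) ltac:(lia).
have e1 : x - k.+1%:Z - 1 = x - k.+2%:Z by lia.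
have e2 : x - k.+1%:Z + 1 = x - k%:Z by lia.
have e3 : x + k.+1%:Z - 1 = x + k%:Z by lia.
have e4 : x + k.+1%:Z + 1 = x + k.+2%:Z by lia.
rewrite e1 e2 in HL; rewrite e3 e4 in HR.
by rewrite muBS; move: IH HL HR; rewrite /shell; lra.
Qed.

Lemma shell_antitone (k t : nat) : (t <= k)%N -> 0 <= x - k%:Z -> x + k%:Z <= n%:Z ->
  shell x k%:Z <= shell x t%:Z.
Proof.
move=> htk h1 h2.
have := muz_diff_ge (x - k%:Z) (k - t) (x + t%:Z) h1 ltac:(lia) ltac:(lia).
have := muz_diff_le (x + t%:Z) (k - t) (x + t%:Z) ltac:(lia) (lexx _) ltac:(lia).
rewrite (_ : x - k%:Z + (k - t)%N%:Z = x - t%:Z); last lia.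
rewrite (_ : x + t%:Z + (k - t)%N%:Z = x + k%:Z); last lia.
by rewrite /shell; lra.
Qed.

Hypothesis x_left : 2 * x <= n%:Z + 1.

Let D (k : nat) := Num.max (dmuz (x + k%:Z)) 0.

Lemma shell_le_slope (k t : nat) : (k <= t)%N -> 0 < x - k%:Z -> x + k%:Z < n%:Z ->
  shell x t%:Z <= shell x k%:Z + (t - k)%N%:R * D k.
Proof.
move=> hkt h1 h2.
have hD : 0 <= (t - k)%N%:R * D k by rewrite mulr_ge0 // le_max lexx orbT.
have right_part : muz (x + t%:Z) <= muz (x + k%:Z) + (t - k)%N%:R * D k.
  case: (boolP (x + t%:Z <= n%:Z + 1)) => ht; last first.
    by rewrite muz_out; [rewrite addr_ge0 ?muz_ge0 | lia].
  have := muz_diff_le (x + k%:Z) (t - k) (x + k%:Z) ltac:(lia) (lexx _) ltac:(lia).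
  rewrite (_ : x + k%:Z + (t - k)%N%:Z = x + t%:Z); last lia.
  have : (t - k)%N%:R * dmuz (x + k%:Z) <= (t - k)%N%:R * D k.
    by rewrite ler_wpM2l // le_max lexx.
  lra.
rewrite /shell; case: (boolP (0 <= x - t%:Z)) => ht; last first.
  by rewrite (muz_out (x - t%:Z)); [have := muz_ge0 (x - k%:Z); lra | lia].
have : (t - k)%N%:R * D k <= muz (x - k%:Z) - muz (x - t%:Z).
  have := muz_diff_ge (x - t%:Z) (t - k) (x - k%:Z - 1) ht ltac:(lia) ltac:(lia).
  rewrite (_ : x - t%:Z + (t - k)%N%:Z = x - k%:Z); last lia.
  have hd0 := dmuz_ge0 (x - k%:Z - 1) ltac:(lia) ltac:(lia).
  have hd1 := dmuz_antitone (x - k%:Z - 1) (x + k%:Z) ltac:(lia) ltac:(lia) ltac:(lia).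
  by apply: le_trans; rewrite ler_wpM2l // ge_max hd0 hd1.
lra.
Qed.

Lemma slope_bound (k : nat) : (1 <= k)%N -> k%:Z + 2 <= x ->
  k%:R * k.+1%:R * D k <= 2 * muz x + k.-1%:R * shell x k%:Z.
Proof.
move=> hk hx; have [a ea] : exists a : nat, x = a%:Z by exists (absz x); lia.
have hD : 0 <= D k by rewrite le_max lexx orbT.
have center : a%:R * D k <= muz x by rewrite ea; apply: muz_ge_slope; lia.
have outer : (a + k)%N%:R * D k <= shell x k%:Z.
  have := muz_ge_slope (a + k) (x + k%:Z) ltac:(lia) ltac:(lia).
  rewrite (_ : (a + k)%N%:Z = x + k%:Z); last lia.
  by rewrite /shell /D; have := muz_ge0 (x - k%:Z); lra.
apply: le_trans (_ : (2 * a + k.-1 * (a + k))%N%:R * D k <= _).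
  by rewrite -natrM ler_wpM2r // ler_nat; nia.
rewrite natrD !natrM mulrDl -!mulrA.
by apply: lerD; apply: ler_wpM2l.
Qed.

Lemma muB_interior (k : nat) : (1 <= k)%N -> k%:Z + 2 <= x ->
  muB n mu x (2 * k + 1)%N%:Z <= c * muB n mu x k%:Z.
Proof.
move=> hk hx; apply: le_trans (muB_three_point k ltac:(lia) ltac:(lia)).
(* Compare the shells k+2 .. 2k+1 with shell k from above, up to the slope D k, and the
   shells 1 .. k with shell k from below; slope_bound pays for the slopes. *)
have split_ball : muB n mu x (2 * k + 1)%N%:Z = muB n mu x k%:Z + shell x k.+1%:Z
    + \sum_(k.+2 <= t < (2 * k + 1).+1) shell x t%:Z.
  rewrite (_ : (2 * k + 1 = k + k.+1)%N); last lia.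
  rewrite muB_split (big_ltn (_ : k.+1 < (k + k.+1).+1)%N); first by rewrite addrA.
  lia.
have inner : k%:R * shell x k%:Z <= \sum_(1 <= t < k.+1) shell x t%:Z.
  have -> : k%:R * shell x k%:Z = \sum_(1 <= t < k.+1) shell x k%:Z.
    by rewrite sumr_const_nat subn1 /= mulr_natl.
  by apply: ler_sum_nat => t /andP[ht1 ht2]; apply: shell_antitone; lia.
have outer : \sum_(k.+2 <= t < (2 * k + 1).+1) shell x t%:Z
    <= k%:R * shell x k%:Z + k%:R * k.+1%:R * D k.
  have -> : k%:R * shell x k%:Z + k%:R * k.+1%:R * D k =
      \sum_(k.+2 <= t < (2 * k + 1).+1) (shell x k%:Z + k.+1%:R * D k).
    by rewrite sumr_const_nat -mulrA -mulrDr mulr_natl; congr (_ *+ _); lia.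
  apply: ler_sum_nat => t /andP[ht1 ht2].
  apply: le_trans (shell_le_slope k t ltac:(lia) ltac:(lia) ltac:(lia)) _.
  apply: lerD => //; apply: ler_wpM2r; first by rewrite le_max lexx orbT.
  by rewrite ler_nat; lia.
have := slope_bound k hk hx.
have -> : k.-1%:R = k%:R - 1 :> R by rewrite -[in RHS](prednK hk) -natr1 addrK.
rewrite split_ball (muB_shells x k) mulrBl mul1r; lra.
Qed.

End InteriorBall.

Lemma muz_mul_le_sqr i : 0 < i -> i <= n%:Z -> muz (i - 1) * muz (i + 1) <= muz i ^+ 2.
Proof.
move=> h1 h2; have := muz_concave i h1 h2.
have := muz_ge0 (i - 1); have := muz_ge0 (i + 1); have := muz_ge0 i.
have := sqr_ge0 (muz (i - 1) - muz (i + 1)).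
nra.
Qed.

Definition muz_prefix (m : nat) : R := \sum_(1 <= i < m.+1) muz i%:Z.

Lemma muB_left_end (r : nat) : muB n mu 1 r%:Z = muz_prefix r.+1.
Proof.
elim: r => [|r IH]; first by rewrite muB0 /muz_prefix big_nat1.
rewrite muBS IH /muz_prefix /shell [in RHS]big_nat_recr //= (muz_out (1 - _)); last lia.
by rewrite add0r; congr (_ + muz _); lia.
Qed.

Lemma muz_prefix_double (s : nat) : muz_prefix (2 * s) =
  muz_prefix s + \sum_(1 <= i < s.+1) muz ((2 * s + 1)%N%:Z - i%:Z).
Proof.
rewrite /muz_prefix (@big_cat_nat _ _ _ s.+1 1 (2 * s).+1) //=; last lia.
congr (_ + _); rewrite (_ : s.+1 = 1 + s)%N // big_addn.
rewrite (_ : ((2 * s).+1 - s = s.+1)%N); last lia.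
by rewrite [in RHS]big_nat_rev; apply: eq_big_nat => i hi; congr muz; lia.
Qed.

Lemma cross_term_le (s i : nat) : (n <= 3 * s + 2)%N -> (2 * s + 1 <= n)%N ->
  (1 <= i <= s)%N ->
  (muz (2 * s + 1)%N%:Z + muz (2 * s + 2)%N%:Z) * muz i%:Z <=
  muz s.+1%:Z * (muz i%:Z + muz ((2 * s + 1)%N%:Z - i%:Z)).
Proof.
move=> hn hsn hi.
have ai0 := muz_ge0 i%:Z; have as0 := muz_ge0 s.+1%:Z.
have mirror : muz i%:Z <= muz ((2 * s + 1)%N%:Z - i%:Z) by apply: muz_le; lia.
have e1 : muz (2 * s + 1)%N%:Z = muz (n%:Z - (2 * s)%N%:Z).
  by rewrite -muz_sym; congr muz; lia.
have e2 : muz (2 * s + 2)%N%:Z = muz (n%:Z - (2 * s)%N%:Z - 1).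
  by rewrite -muz_sym; congr muz; lia.
case: (ltnP n (3 * s + 2)) => hn'.
  have u : muz (2 * s + 1)%N%:Z <= muz s.+1%:Z by rewrite e1; apply: muz_le; lia.
  have v : muz (2 * s + 2)%N%:Z <= muz s.+1%:Z by rewrite e2; apply: muz_le; lia.
  have := ler_wpM2r ai0 (lerD u v); have := ler_wpM2l as0 mirror.
  lra.
have -> : muz (2 * s + 1)%N%:Z = muz s.+2%:Z by rewrite e1; congr muz; lia.
have -> : muz (2 * s + 2)%N%:Z = muz s.+1%:Z by rewrite e2; congr muz; lia.
have := muz_mul_le_sqr s.+1%:Z ltac:(lia) ltac:(lia).
have -> : s.+1%:Z - 1 = s%:Z by lia.
have -> : s.+1%:Z + 1 = s.+2%:Z by lia.
have : muz i%:Z <= muz s%:Z by apply: muz_le; lia.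
have : muz s.+1%:Z <= muz ((2 * s + 1)%N%:Z - i%:Z) by apply: muz_le; lia.
have := muz_ge0 s.+2%:Z.
nra.
Qed.

Lemma muz_prefix_step (s : nat) : (1 <= s)%N -> (n <= 3 * s + 2)%N ->
  muz_prefix (2 * s.+1) * muz_prefix s <= muz_prefix (2 * s) * muz_prefix s.+1.
Proof.
move=> hs hn.
have e1 : muz_prefix (2 * s.+1) =
    muz_prefix (2 * s) + muz (2 * s + 1)%N%:Z + muz (2 * s + 2)%N%:Z.
  rewrite /muz_prefix (_ : (2 * s.+1).+1 = (2 * s).+3)%N; last lia.
  rewrite [in LHS]big_nat_recr //= [in LHS]big_nat_recr //=.
  congr (_ + muz _ + muz _); lia.
have e2 : muz_prefix s.+1 = muz_prefix s + muz s.+1%:Z by rewrite /muz_prefix big_nat_recr.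
rewrite e1 e2.
suff : (muz (2 * s + 1)%N%:Z + muz (2 * s + 2)%N%:Z) * muz_prefix s <=
    muz_prefix (2 * s) * muz s.+1%:Z by lra.
have prefix_ge0 m : 0 <= muz_prefix m by apply: sumr_ge0 => i _; apply: muz_ge0.
case: (ltnP n (2 * s + 1)) => hsn.
  have -> : muz (2 * s + 1)%N%:Z = 0 by apply: muz_out; lia.
  have -> : muz (2 * s + 2)%N%:Z = 0 by apply: muz_out; lia.
  by rewrite addr0 mul0r mulr_ge0 ?muz_ge0.
rewrite muz_prefix_double /muz_prefix -big_split /= big_distrr big_distrl /=.
apply: ler_sum_nat => i hi; rewrite [X in _ <= X]mulrC.
by apply: cross_term_le; lia.
Qed.

Hypothesis n_ge3 : (3 <= n)%N.

Lemma ball_ratio_left_step k : (n <= 3 * k + 5)%N -> ball_ratio 1 k.+1 <= ball_ratio 1 k.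
Proof.
move=> hk; rewrite /ball_ratio !muB_left_end.
rewrite (_ : (2 * k.+1 + 1).+1 = 2 * k.+2)%N; last lia.
rewrite (_ : (2 * k + 1).+1 = 2 * k.+1)%N; last lia.
have prefix_gt0 m : 0 < muz_prefix m.+1 by rewrite -muB_left_end muB_gt0 //; lia.
rewrite ler_pdivrMr // mulrAC ler_pdivlMr //.
by apply: muz_prefix_step; lia.
Qed.

Lemma ball_ratio_left_antitone m k : (n <= 3 * m + 5)%N -> (m <= k)%N ->
  ball_ratio 1 k <= ball_ratio 1 m.
Proof.
move=> hm; elim: k => [|k IH] hk; first by have -> : m = 0%N by lia.
case: (ltnP m k.+1) => hmk; last by have -> : m = k.+1 by lia.
by apply: le_trans (IH _); [apply: ball_ratio_left_step | ]; lia.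
Qed.

Lemma ball_ratio_left_le (B : R) :
  (forall m : nat, (3 * m + 2 < n)%N -> ball_ratio 1 m <= B) ->
  forall m : nat, ball_ratio 1 m <= B.
Proof.
move=> HB m; case: (ltnP (3 * m + 2) n) => hm; first exact: HB.
by apply: le_trans (ball_ratio_left_antitone ((n - 3) %/ 3) m _ _) (HB _ _); lia.
Qed.

Lemma ball_ratio_le_max (B : R) (x k : nat) :
  (forall m : nat, (3 * m + 2 < n)%N -> ball_ratio 1 m <= B) ->
  (1 <= x <= n)%N -> ball_ratio x%:Z k <= Num.max B c.
Proof.
move=> HB hx.
have le_c t : t <= c -> t <= Num.max B c by move=> ht; rewrite le_max ht orbT.
have le_B t : t <= B -> t <= Num.max B c by move=> ht; rewrite le_max ht.
case: k => [|k].
  apply: le_c; rewrite /ball_ratio muB0 (_ : (2 * 0 + 1)%N%:Z = 1) // muB1.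
  rewrite ler_pdivrMr; last by apply: muz_gt0; lia.
  by apply: three_point; lia.
wlog hx2 : x hx / (2 * x <= n + 1)%N.
  move=> W; case: (leqP (2 * x) (n + 1)) => h; first exact: W.
  rewrite -ball_ratio_reflect (_ : n%:Z + 1 - x%:Z = (n.+1 - x)%N%:Z); last lia.
  by apply: W; lia.
case: (leqP k.+3 x) => hxk.
  apply: le_c; rewrite /ball_ratio ler_pdivrMr; last by apply: muB_gt0; lia.
  by apply: muB_interior; lia.
apply: le_B; apply: le_trans (ball_ratio_left x k.+1 _ _) (ball_ratio_left_le _ HB _); lia.
Qed.

End PathMeasure.

Lemma Cmu_le_max {R : realType} {n : nat} {mu : nat -> R} :
  (3 <= n)%N -> is_measure n mu -> is_symmetric n mu -> C0mu n mu < 3 ->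
  Cmu n mu <= Num.max (M1 n mu) (C0mu n mu).
Proof.
move=> n_ge3 mu_gt0 mu_sym C0_lt3.
apply: ge_sup; first by exists (ball_ratio R n mu 1 0), 1%N, 0%N; split=> //; lia.
move=> t [x [k [hx ->]]].
apply: (ball_ratio_le_max _ _ _ mu_gt0 mu_sym _ (C0mu_three_point _ _ _ mu_gt0)) => //.
exact: ball_ratio_le_M1.
Qed.

Theorem theorem5p1 (R : realType) (n : nat) (mu : nat -> R) :
  (3 <= n)%N -> is_measure n mu -> is_symmetric n mu ->
  C0mu n mu < 3 ->
  Cmu n mu = Num.max (M1 n mu) (Num.max (M2 n mu) (C0mu n mu)).
Proof.
move=> n_ge3 mu_gt0 mu_sym C0_lt3; have n_gt0 : (0 < n)%N by lia.
apply/le_anti/andP; split.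
  apply: le_trans (Cmu_le_max n_ge3 mu_gt0 mu_sym C0_lt3) _.
  by rewrite ge_max !le_max !lexx !orbT.
rewrite !ge_max (M1_le_Cmu _ _ _ mu_gt0) ?(M2_le_Cmu _ _ _ mu_gt0) //.
exact: C0mu_le_Cmu.
Qed.
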